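(* Let $G$ be a Tanner graph and $t\ge1$ an integer such that every irreducible lift-realizable pseudocodeword of $G$ has all components in $[0,t]$. Then every irreducible lift-realizable pseudocodeword $p=(p_1,\dots,p_n)$ of $G$ with support set $V$ satisfies (a) $w^{AWGN}(p)\ge \frac{2t^2}{(1+t^2)(t-1)+2t}|V|$ and (b) $w^{BSC}(p)\ge \frac1t|V|$.
   Context: A Tanner graph $G$ is a finite bipartite graph with variable nodes $v_1,\dots,v_n$ and check nodes; its code consists of all $x\in\{0,1\}^n$ with every check node having an even number of neighbours $v_i$ with $x_i=1$. A degree-$\ell$ lift replaces each node by $\ell$ copies and each edge by a perfect matching between copy-sets; a lift-realizable pseudocodeword $p\in\mathbb{Z}_{\ge0}^n$ is obtained from a codeword of the code of a finite lift by letting $p_i$ be the number of copies of $v_i$ assigned 1; it is irreducible if it is not a sum of two or more nonzero codewords/pseudocodewords. The support of $p$ is $\{i:p_i\neq0\}$. For nonzero $p$, with $e$ the smallest number such that the sum of the $e$ largest $p_i$ is at least $\frac12\sum_ip_i$, $w^{BSC}(p)=2e$ if equality holds and $2e-1$ otherwise; $w^{AWGN}(p)=(\sum_ip_i)^2/\sum_ip_i^2$. *)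

From mathcomp Require Import all_boot all_order all_algebra all_fingroup.
Set Implicit Arguments. Unset Strict Implicit. Unset Printing Implicit Defensive.
Import Order.TTheory GRing.Theory Num.Theory.

(* A Tanner graph with variable nodes 'I_n and check nodes 'I_m is given by
   its (bipartite, simple) adjacency relation  H c v  (check c -- variable v). *)

(* A degree-l lift: copies (v,a), (c,b) with a,b : 'I_l; each edge (c,v) of H
   is replaced by the perfect matching (v,a) -- (c, pi c v a). *)
Definition lift_codeword (n m l : nat) (H : 'I_m -> 'I_n -> bool)
  (pi : 'I_m -> 'I_n -> {perm 'I_l}) (x : 'I_n -> 'I_l -> bool) : Prop :=
  forall (c : 'I_m) (b : 'I_l),
    ~~ odd #|[set va : 'I_n * 'I_l |
              [&& H c va.1, pi c va.1 va.2 == b & x va.1 va.2]]|.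

Definition lift_realizable (n m : nat) (H : 'I_m -> 'I_n -> bool)
  (p : {ffun 'I_n -> nat}) : Prop :=
  exists (l : nat) (pi : 'I_m -> 'I_n -> {perm 'I_l}) (x : 'I_n -> 'I_l -> bool),
    0 < l /\ lift_codeword H pi x /\ forall i, p i = #|[set a | x i a]|.

Definition nonzero_pcw (n : nat) (p : {ffun 'I_n -> nat}) : Prop :=
  exists i, p i != 0.

Definition irreducible (n m : nat) (H : 'I_m -> 'I_n -> bool)
  (p : {ffun 'I_n -> nat}) : Prop :=
  [/\ lift_realizable H p, nonzero_pcw p &
   ~ exists s : seq {ffun 'I_n -> nat},
       [/\ 2 <= size s,
           forall q, q \in s -> lift_realizable H q /\ nonzero_pcw q &
           forall i, p i = \sum_(q <- s) q i]].

Definition pcw_support (n : nat) (p : {ffun 'I_n -> nat}) : {set 'I_n} :=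
  [set i | p i != 0].

Definition pcw_total (n : nat) (p : {ffun 'I_n -> nat}) : nat := \sum_i p i.

Definition w_awgn (n : nat) (p : {ffun 'I_n -> nat}) : rat :=
  ((pcw_total p)%:R ^+ 2 / (\sum_i (p i ^ 2))%:R)%R.

Definition top_sum (n : nat) (p : {ffun 'I_n -> nat}) (e : nat) : nat :=
  sumn (take e (sort geq [seq p i | i <- enum 'I_n])).

Definition bsc_e (n : nat) (p : {ffun 'I_n -> nat}) : nat :=
  find (fun e => pcw_total p <= (top_sum p e).*2) (iota 0 n.+1).

Definition w_bsc (n : nat) (p : {ffun 'I_n -> nat}) : nat :=
  if (top_sum p (bsc_e p)).*2 == pcw_total p then (bsc_e p).*2
  else (bsc_e p).*2.-1.

From mathcomp Require Import all_boot all_order all_algebra.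
From mathcomp Require Import zify lra.
Import Order.TTheory GRing.Theory Num.Theory.

(* Only the bound [p_i <= t] (and [p <> 0]) of an irreducible pseudocodeword
   is used.  For the AWGN weight, [(p_i - 1)(p_i - t) <= 0] gives
   [sum p_i^2 + t |V| <= (1 + t) sum p_i], and AM-GM turns this into a lower
   bound for [(sum p_i)^2 / sum p_i^2].  For the BSC weight, the [e] largest
   components carry at least half the total and each is at most [t], while
   each remaining nonzero component contributes at least [1] to the other
   half. *)

Section NatSeq.

Implicit Types (s : seq nat) (t e : nat).

Lemma sumn_le_size_mul s t : {in s, forall x, x <= t} -> sumn s <= size s * t.
Proof.
elim: s => //= x s IHs s_le_t.
rewrite mulSn leq_add ?s_le_t ?mem_head // IHs // => y y_s.
by rewrite s_le_t // in_cons y_s orbT.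
Qed.

Lemma count_nz_le_sumn s : count (predC1 0) s <= sumn s.
Proof. by elim: s => //= -[|x] s IHs /=; lia. Qed.

Lemma count_nz_le_prefix_weight s t e :
    {in s, forall x, x <= t} -> sumn s <= (sumn (take e s)).*2 ->
  count (predC1 0) s <=
    (if (sumn (take e s)).*2 == sumn s then e.*2 else e.*2.-1) * t.
Proof.
move=> s_le_t half_le.
have sumn_split : sumn s = sumn (take e s) + sumn (drop e s).
  by rewrite -sumn_cat cat_take_drop.
have count_split : count (predC1 0) s =
    count (predC1 0) (take e s) + count (predC1 0) (drop e s).
  by rewrite -count_cat cat_take_drop.
have count_take : count (predC1 0) (take e s) <= e.
  by rewrite (leq_trans (count_size _ _)) // size_take_min geq_minl.
have count_drop := count_nz_le_sumn (drop e s).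
have take_le : sumn (take e s) <= e * t.
  apply: leq_trans (sumn_le_size_mul (take e s) t _) _.
    by move=> x /mem_take; apply: s_le_t.
  by rewrite leq_mul2r size_take_min geq_minl orbT.
case: eqP => [half_eq | half_neq].
  by have := count_nz_le_sumn s; lia.
(* k <= e + sumn (drop e s) <= e + e t - 1 <= (2e - 1) t, as (e - 1)(t - 1) >= 0 *)
have drop_lt_take : sumn (drop e s) < sumn (take e s) by lia.
have /[!muln_gt0]/andP[e_pos t_pos] : 0 < e * t by lia.
have et_ge : e + t <= e * t + 1 by nia.
nia.
Qed.

End NatSeq.

Section AwgnAlgebra.

Local Open Scope ring_scope.

Variable R : realFieldType.
Implicit Types (k S Q : R) (t : nat).

Lemma mul_sqrD_le_awgn_denom t : (1 <= t)%N ->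
  t%:R * (1 + t%:R) ^+ 2 <= 2 * ((1 + t%:R ^+ 2) * (t%:R - 1) + 2 * t%:R) :> R.
Proof.
(* RHS - LHS = (t - 1)^2 (t - 2) *)
move=> t_ge1; have [->|t_ne1] := eqVneq t 1%N; first lra.
have : 0 <= (t%:R - 1) ^+ 2 * (t%:R - 2) :> R.
  by rewrite mulr_ge0 ?sqr_ge0 // subr_ge0 ler_nat; lia.
nra.
Qed.

Lemma amgm_support_bound t k S Q : 0 <= k -> Q + t%:R * k <= (1 + t%:R) * S ->
  4 * t%:R * k * Q <= (1 + t%:R) ^+ 2 * S ^+ 2.
Proof.
move=> k_ge0 QS.
have tk4_ge0 : 0 <= 4 * (t%:R * k) by rewrite !mulr_ge0.
have Q_le : Q <= (1 + t%:R) * S - t%:R * k by lra.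
have := ler_wpM2l tk4_ge0 Q_le.
have := sqr_ge0 ((1 + t%:R) * S - 2 * t%:R * k).
nra.
Qed.

Lemma awgn_ratio_ge t k S Q : (1 <= t)%N -> 0 <= k -> 0 < Q ->
    Q + t%:R * k <= (1 + t%:R) * S ->
  2 * t%:R ^+ 2 / ((1 + t%:R ^+ 2) * (t%:R - 1) + 2 * t%:R) * k <= S ^+ 2 / Q.
Proof.
move=> t_ge1 k_ge0 Q_gt0 QS.
have t_ge1R : 1 <= t%:R :> R by rewrite ler1n.
have denom_gt0 : 0 < (1 + t%:R ^+ 2) * (t%:R - 1) + 2 * t%:R :> R by nra.
rewrite mulrAC ler_pdivrMr // [leRHS]mulrAC ler_pdivlMr //.
have := amgm_support_bound t k S Q k_ge0 QS.
have := mul_sqrD_le_awgn_denom t t_ge1.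
nra.
Qed.

End AwgnAlgebra.

Section Pseudoweights.

Variables (n t : nat) (p : {ffun 'I_n -> nat}).
Hypothesis p_le_t : forall i, p i <= t.

Let ps := [seq p i | i <- enum 'I_n].

Lemma card_pcw_support : #|pcw_support p| = count (predC1 0) ps.
Proof.
rewrite cardsE cardE size_filter count_map enumT.
by apply: eq_count => i.
Qed.

Lemma pcw_total_sumn : pcw_total p = sumn ps.
Proof. by rewrite /pcw_total sumnE big_map big_enum. Qed.

Lemma top_sum_bsc_e : pcw_total p <= (top_sum p (bsc_e p)).*2.
Proof.
set P := fun e => pcw_total p <= (top_sum p e).*2.
have P_n : P n.
  rewrite /P /top_sum take_oversize ?size_sort ?size_map -?enumT ?size_enum_ord //.
  by rewrite pcw_total_sumn (perm_sumn (permEl (perm_sort _ _))) -addnn leq_addr.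
have has_P : has P (iota 0 n.+1) by apply/hasP; exists n; rewrite // mem_iota add0n ltnSn.
have find_lt : bsc_e p < n.+1 by rewrite -[ltnRHS](size_iota 0) -has_find.
by have := nth_find 0 has_P; rewrite nth_iota.
Qed.

Lemma w_bsc_ge : #|pcw_support p| <= w_bsc p * t.
Proof.
have sorted_perm : perm_eq (sort geq ps) ps by exact: permEl (perm_sort _ _).
rewrite card_pcw_support -(permP sorted_perm) /w_bsc pcw_total_sumn.
rewrite -(perm_sumn sorted_perm) count_nz_le_prefix_weight //.
  by move=> x; rewrite (perm_mem sorted_perm) => /mapP[i _ ->].
by rewrite (perm_sumn sorted_perm) -pcw_total_sumn top_sum_bsc_e.
Qed.

Lemma sum_sq_add_card_support_le :
  \sum_i p i ^ 2 + t * #|pcw_support p| <= (1 + t) * pcw_total p.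
Proof.
rewrite -sum1_card big_distrr /pcw_total big_distrr [X in _ + X]big_mkcond.
rewrite -big_split leq_sum // => i _ /=; rewrite inE.
by have := p_le_t i; case: (p i) => [|x] /=; nia.
Qed.

Lemma w_awgn_ge : 1 <= t -> nonzero_pcw p ->
  (2 * t%:R ^+ 2 / ((1 + t%:R ^+ 2) * (t%:R - 1) + 2 * t%:R)
     * #|pcw_support p|%:R <= w_awgn p)%R.
Proof.
move=> t_ge1 [i0 p_i0_nz].
have sum_sq_gt0 : 0 < \sum_i p i ^ 2.
  by rewrite (bigD1 i0) //= addn_gt0 expn_gt0 lt0n p_i0_nz.
apply: awgn_ratio_ge; rewrite ?ler0n ?ltr0n //.
by rewrite nat1r -!natrM -natrD ler_nat; exact: sum_sq_add_card_support_le.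
Qed.

End Pseudoweights.

Theorem lemma3 (n m : nat) (H : 'I_m -> 'I_n -> bool) (t : nat) :
  1 <= t ->
  (forall q : {ffun 'I_n -> nat}, irreducible H q -> forall i, q i <= t) ->
  forall p : {ffun 'I_n -> nat}, irreducible H p ->
    ((2 * (t%:R) ^+ 2 / ((1 + (t%:R) ^+ 2) * (t%:R - 1) + 2 * t%:R))
        * (#|pcw_support p|)%:R <= w_awgn p)%R
    /\ ((#|pcw_support p|)%:R / t%:R <= (w_bsc p)%:R :> rat)%R.
Proof.
move=> t_ge1 irreducible_le_t p p_irr.
have p_le_t := irreducible_le_t p p_irr.
have [_ p_nz _] := p_irr.
split; first exact: w_awgn_ge.
by rewrite ler_pdivrMr ?ltr0n // -natrM ler_nat w_bsc_ge.
Qed.
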